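(* Suppose $\Delta;\,n\vdash e:\theta,\ \Pi$ is derivable in the static analysis. Then for all $P\subseteq\mathsf{Privileges}$ and all $h\in[\![\Delta^*]\!]$, if $\mathsf{safe}\,\Delta(h)$ and $\Pi\subseteq P$, then $\mathsf{safe}\,\theta\,([\![\Delta^*\vdash e:\theta^*]\!]\,n\,P\,h)$.
   Context: Fix sets $\mathsf{Principals}$ and $\mathsf{Privileges}$ and an access control list $\mathcal{A}:\mathsf{Principals}\to\mathcal{P}(\mathsf{Privileges})$. Language. Types: $t::=\mathtt{bool}\mid t_1\to t_2$. Expressions: $e::=\mathtt{true}\mid x\mid \mathtt{if}\ e\ \mathtt{then}\ e_1\ \mathtt{else}\ e_2\mid \lambda x.e\mid e_1\,e_2\mid \mathtt{letrec}\ f(x)=e_1\ \mathtt{in}\ e_2\mid \mathtt{signs}\ n\ e\mid \mathtt{dopriv}\ p\ \mathtt{in}\ e\mid \mathtt{check}\ p\ \mathtt{for}\ e\mid \mathtt{test}\ p\ \mathtt{then}\ e_1\ \mathtt{else}\ e_2$ ($n$ a principal, $p$ a privilege). Typing $D\vdash e:t$ is simply typed: $\mathtt{letrec}$ typed by $D,f:t_1\to t_2,x:t_1\vdash e_1:t_2$ and $D,f:t_1\to t_2\vdash e_2:t$; $\mathtt{signs},\mathtt{dopriv},\mathtt{check}$ preserve the body type; $\mathtt{test}$ and $\mathtt{if}$ need branches of a common type ($\mathtt{if}$ a $\mathtt{bool}$ guard). Eager semantics. $\bot,\star$ are two distinct values, neither booleans nor functions. For a cpo $C$, $C_{\bot\star}=C\cup\{\bot,\star\}$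 with $u\le v$ iff $u=\bot$ or $u=v$ or $u,v\in C$, $u\le v$. $[\![\mathtt{bool}]\!]=\{\mathsf{true},\mathsf{false}\}$ and $\mathcal{P}(\mathsf{Privileges})$ ordered by equality; $[\![t_1\to t_2]\!]=\mathcal{P}(\mathsf{Privileges})\to[\![t_1]\!]\to[\![t_2]\!]_{\bot\star}$ (continuous, pointwise order). $[\![D]\!]$: records $h$ with $h.x\in[\![D(x)]\!]$. $[\![D\vdash e:t]\!]\in\mathsf{Principals}\to\mathcal{P}(\mathsf{Privileges})\to[\![D]\!]\to[\![t]\!]_{\bot\star}$, written $[\![e]\!]nPh$. ''let $d=E_1$ in $E_2$'' yields $E_1$ if $E_1\in\{\bot,\star\}$, else $E_2$ with $d:=E_1$. $P\sqcup_n\{p\}$ is $P\cup\{p\}$ if $p\in\mathcal{A}(n)$, else $P$. Equations: $[\![\mathtt{true}]\!]nPh=\mathsf{true}$; $[\![x]\!]nPh=h.x$; $[\![\mathtt{if}\ e\ \mathtt{then}\ e_1\ \mathtt{else}\ e_2]\!]nPh=$ let $b=[\![e]\!]nPh$ in (if $b$ then $[\![e_1]\!]nPh$ else $[\![e_2]\!]nPh$); $[\![\lambda x.e]\!]nPh=\lambda P'.\lambda d.[\![e]\!]nP'(h[x\mapsto d])$; $[\![e_1e_2]\!]nPh=$ let $f=[\![e_1]\!]nPh$ in let $d=[\![e_2]\!]nPh$ in $fPd$; $[\![\mathtt{letrec}\ f(x)=e_1\ \mathtt{in}\ e_2]\!]nPh=[\![e_2]\!]nP(h[f\mapsto\mathit{fix}\,G])$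 with $G(g)=\lambda P'.\lambda d.[\![e_1]\!]nP'(h[f\mapsto g,x\mapsto d])$ ($\mathit{fix}$ = least fixed point); $[\![\mathtt{signs}\ n'\ e]\!]nPh=[\![e]\!]n'(P\cap\mathcal{A}(n'))h$; $[\![\mathtt{dopriv}\ p\ \mathtt{in}\ e]\!]nPh=[\![e]\!]n(P\sqcup_n\{p\})h$; $[\![\mathtt{check}\ p\ \mathtt{for}\ e]\!]nPh=$ if $p\in P$ then $[\![e]\!]nPh$ else $\star$; $[\![\mathtt{test}\ p\ \mathtt{then}\ e_1\ \mathtt{else}\ e_2]\!]nPh=$ if $p\in P$ then $[\![e_1]\!]nPh$ else $[\![e_2]\!]nPh$. Static analysis. Annotated types $\theta::=\mathtt{bool}\mid\theta_1\xrightarrow{\Pi}\theta_2$ ($\Pi\subseteq\mathsf{Privileges}$); erasure $\mathtt{bool}^*=\mathtt{bool}$, $(\theta_1\xrightarrow{\Pi}\theta_2)^*=\theta_1^*\to\theta_2^*$, and $\Delta^*$ erases an annotated context pointwise. Subtyping: least relation with $\mathtt{bool}\le\mathtt{bool}$ and $\theta_1\xrightarrow{\Pi_1}\theta_1'\le\theta_2\xrightarrow{\Pi_2}\theta_2'$ if $\theta_2\le\theta_1$, $\theta_1'\le\theta_2'$, $\Pi_1\subseteq\Pi_2$. Rules for $\Delta;n\vdash e:\theta,\Pi$: $\mathtt{true}:\mathtt{bool},\varnothing$; $x:\Delta(x),\varnothing$; $\lambda x.e:\theta_1\xrightarrow{\Pi}\theta_2,\varnothing$ if $\Delta,x:\theta_1;n\vdash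 e:\theta_2,\Pi$; $e_1e_2:\theta_2,\Pi\cup\Pi_1\cup\Pi_2$ if $e_1:\theta_1\xrightarrow{\Pi}\theta_2,\Pi_1$, $e_2:\theta_1',\Pi_2$, $\theta_1'\le\theta_1$; $\mathtt{if}\ e\ \mathtt{then}\ e_1\ \mathtt{else}\ e_2:\theta,\Pi_1\cup\Pi_2\cup\Pi_3$ if $e:\mathtt{bool},\Pi_1$, $e_1:\theta,\Pi_2$, $e_2:\theta,\Pi_3$; $\mathtt{letrec}\ f(x)=e_1\ \mathtt{in}\ e_2:\theta,\Pi\cup\Pi_1$ if $\Delta,f:\theta_1\xrightarrow{\Pi}\theta_2,x:\theta_1;n\vdash e_1:\theta_2,\Pi$ and $\Delta,f:\theta_1\xrightarrow{\Pi}\theta_2;n\vdash e_2:\theta,\Pi_1$; $\mathtt{check}\ p\ \mathtt{for}\ e:\theta,\Pi\cup\{p\}$ if $e:\theta,\Pi$; $\mathtt{dopriv}\ p\ \mathtt{in}\ e:\theta,\Pi$ if $e:\theta,\Pi\sqcup_n\{p\}$; $\Delta;n\vdash\mathtt{signs}\ n'\ e:\theta,\Pi$ if $\Delta;n'\vdash e:\theta,\Pi$ and $\Pi\subseteq\mathcal{A}(n')$; $\mathtt{test}\ p\ \mathtt{then}\ e_1\ \mathtt{else}\ e_2:\theta,\Pi_1\cup\Pi_2$ if $e_1:\theta,\Pi_1$ and $e_2:\theta,\Pi_2$ (all premises under $\Delta;n$ unless stated). Safety predicate. $\mathsf{safe}\,\theta$ on $[\![\theta^*]\!]_{\bot\star}$: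 $\mathsf{safe}\,\theta(\bot)$ true, $\mathsf{safe}\,\theta(\star)$ false; $\mathsf{safe}\,\mathtt{bool}(b)$ true; $\mathsf{safe}(\theta_1\xrightarrow{\Pi}\theta_2)(f)$ iff for all $P\subseteq\mathsf{Privileges}$, $d\in[\![\theta_1^*]\!]$: $\Pi\subseteq P$ and $\mathsf{safe}\,\theta_1(d)$ imply $\mathsf{safe}\,\theta_2(fPd)$. For environments, $\mathsf{safe}\,\Delta(h)$ iff $\mathsf{safe}(\Delta(x))(h.x)$ for all $x$ in the domain of $h$. *)

From Stdlib Require Import Arith List ClassicalEpsilon.
Set Implicit Arguments.
Unset Strict Implicit.

Section Language.
Variables (Principal Priv : Type).

Definition pset := Priv -> Prop.
Definition pempty : pset := fun _ => False.
Definition psingle (p : Priv) : pset := fun q => q = p.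
Definition punion (P Q : pset) : pset := fun q => P q \/ Q q.
Definition pinter (P Q : pset) : pset := fun q => P q /\ Q q.
Definition psubset (P Q : pset) : Prop := forall q, P q -> Q q.

Definition var := nat.

Inductive ty : Type := Tbool | Tarrow (t1 t2 : ty).

Inductive expr : Type :=
| Etrue
| Evar (x : var)
| Eif (e e1 e2 : expr)
| Elam (x : var) (e : expr)
| Eapp (e1 e2 : expr)
| Eletrec (f x : var) (e1 e2 : expr)
| Esigns (n : Principal) (e : expr)
| Edopriv (p : Priv) (e : expr)
| Echeck (p : Priv) (e : expr)
| Etest (p : Priv) (e1 e2 : expr).

(* contexts: association lists, the most recent binding first (D, x:t) *)
Definition ctx := list (var * ty).
Fixpoint lookup (D : ctx) (x : var) : option ty :=
  match D with
  | nil => None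
  | (y, t) :: D' => if Nat.eqb x y then Some t else lookup D' x
  end.

(* simple typing D |- e : t (in Type, as the semantics is defined on it) *)
Inductive typing : ctx -> expr -> ty -> Type :=
| T_true D : typing D Etrue Tbool
| T_var D x t : lookup D x = Some t -> typing D (Evar x) t
| T_if D e e1 e2 t :
    typing D e Tbool -> typing D e1 t -> typing D e2 t -> typing D (Eif e e1 e2) t
| T_lam D x e t1 t2 :
    typing ((x, t1) :: D) e t2 -> typing D (Elam x e) (Tarrow t1 t2)
| T_app D e1 e2 t1 t2 :
    typing D e1 (Tarrow t1 t2) -> typing D e2 t1 -> typing D (Eapp e1 e2) t2
| T_letrec D f x e1 e2 t1 t2 t :
    typing ((x, t1) :: (f, Tarrow t1 t2) :: D) e1 t2 ->
    typing ((f, Tarrow t1 t2) :: D) e2 t ->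
    typing D (Eletrec f x e1 e2) t
| T_signs D n e t : typing D e t -> typing D (Esigns n e) t
| T_dopriv D p e t : typing D e t -> typing D (Edopriv p e) t
| T_check D p e t : typing D e t -> typing D (Echeck p e) t
| T_test D p e1 e2 t :
    typing D e1 t -> typing D e2 t -> typing D (Etest p e1 e2) t.

Record preord := { car : Type; rel : car -> car -> Prop }.

Inductive lifted (T : Type) : Type := Bot | Star | Val (v : T).
Arguments Bot {T}. Arguments Star {T}.

Definition lift_le (C : preord) (u v : lifted (car C)) : Prop :=
  u = Bot \/ u = v \/ (exists a b, u = Val a /\ v = Val b /\ rel a b).
Definition lift (C : preord) : preord := {| car := lifted (car C); rel := fun u v => @lift_le C u v |}.

Definition chain (C : preord) (c : nat -> car C) : Prop :=
  forall i, @rel C (c i) (c (S i)).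
Definition is_lub (C : preord) (c : nat -> car C) (x : car C) : Prop :=
  (forall i, @rel C (c i) x) /\ (forall y, (forall i, @rel C (c i) y) -> @rel C x y).
Definition continuous (C E : preord) (f : car C -> car E) : Prop :=
  (forall x y, @rel C x y -> @rel E (f x) (f y)) /\
  (forall (c : nat -> car C) x, @chain C c -> @is_lub C c x -> @is_lub E (fun i => f (c i)) (f x)).

(* [t1 -> t2] = P(Privileges) -> [t1] -> [t2]_{bot,star}, continuous,
   pointwise order (P(Privileges) is discrete, so only continuity in the
   second argument is a constraint). *)
Definition funspace (C E : preord) : preord :=
  {| car := { f : pset -> car C -> lifted (car E) |
              forall P, continuous (C := C) (E := lift E) (f P) };
     rel := fun f g => forall P d, lift_le (proj1_sig f P d) (proj1_sig g P d) |}.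

Fixpoint dom (t : ty) : preord :=
  match t with
  | Tbool => {| car := bool; rel := @eq bool |}
  | Tarrow t1 t2 => funspace (dom t1) (dom t2)
  end.

Lemma const_bot_continuous (C E : preord) :
  continuous (C := C) (E := lift E) (fun _ => Bot).
Proof.
  split.
  - intros; left; reflexivity.
  - intros c x _ _; split.
    + intros i; left; reflexivity.
    + intros y _; left; reflexivity.
Qed.

Definition botfun (C E : preord) : car (funspace C E) :=
  exist (fun f : pset -> car C -> lifted (car E) => forall P, continuous (C := C) (E := lift E) (f P)) (fun _ _ => Bot) (fun _ => const_bot_continuous C E).

(* The defining equations of the semantics always produce continuous
   functions, so the guard always succeeds; it only lets us write the
   equations before proving continuity. *)
Definition mk_fun (C E : preord) (f : pset -> car C -> lifted (car E))
  : car (funspace C E) :=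
  match excluded_middle_informative
          (forall P, continuous (C := C) (E := lift E) (f P)) with
  | left H => exist _ f H
  | right _ => botfun C E
  end.

Definition lfp (C : preord) (i : inhabited (car C)) (G : car C -> car C) : car C :=
  epsilon i (fun g => G g = g /\ forall g', G g' = g' -> @rel C g g').

Definition lift_opt (o : option ty) : Type :=
  match o with Some t => car (dom t) | None => unit end.
Definition env (D : ctx) := forall x : var, lift_opt (lookup D x).
Definition upd (D : ctx) (h : env D) (x : var) (t : ty) (d : car (dom t))
  : env ((x, t) :: D) :=
  fun y => match Nat.eqb y x as b
             return lift_opt (if b then Some t else lookup D y) with
           | true => d
           | false => h y
           end.

Section Semantics.
Variable A : Principal -> pset.   (* access control list *)

Definition pjoin (n : Principal) (P : pset) (p : Priv) : pset :=
  fun q => P q \/ (q = p /\ A n p).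

Fixpoint den (D : ctx) (e : expr) (t : ty) (d : typing D e t) {struct d}
  : Principal -> pset -> env D -> lifted (car (dom t)) :=
  match d in typing D e t return Principal -> pset -> env D -> lifted (car (dom t)) with
  | T_true _ => fun _ _ _ => Val true
  | @T_var D x t H => fun _ _ h => Val (eq_rect _ lift_opt (h x) _ H)
  | T_if d0 d1 d2 => fun n P h =>
      match den d0 n P h with
      | Bot => Bot | Star => Star
      | Val b => if b then den d1 n P h else den d2 n P h
      end
  | @T_lam D x e t1 t2 d1 => fun n P h =>
      Val (mk_fun (C := dom t1) (E := dom t2)
             (fun P' v => den d1 n P' (@upd _ h x t1 v)))
  | T_app d1 d2 => fun n P h =>
      match den d1 n P h with
      | Bot => Bot | Star => Star
      | Val f =>
          match den d2 n P h with
          | Bot => Bot | Star => Star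
          | Val v => proj1_sig f P v
          end
      end
  | @T_letrec D f x e1 e2 t1 t2 t d1 d2 => fun n P h =>
      let G := fun g : car (dom (Tarrow t1 t2)) =>
        mk_fun (C := dom t1) (E := dom t2)
          (fun P' v => den d1 n P' (@upd _ (@upd _ h f (Tarrow t1 t2) g) x t1 v)) in
      den d2 n P
        (@upd _ h f (Tarrow t1 t2)
           (lfp (C := dom (Tarrow t1 t2)) (inhabits (botfun (dom t1) (dom t2))) G))
  | @T_signs D n' e t d1 => fun _ P h => den d1 n' (pinter P (A n')) h
  | @T_dopriv D p e t d1 => fun n P h => den d1 n (pjoin n P p) h
  | @T_check D p e t d1 => fun n P h =>
      if excluded_middle_informative (P p) then den d1 n P h else Star
  | @T_test D p e1 e2 t d1 d2 => fun n P h =>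
      if excluded_middle_informative (P p) then den d1 n P h else den d2 n P h
  end.

Inductive aty : Type := Abool | Aarrow (th1 : aty) (Pi : pset) (th2 : aty).

Fixpoint aerase (th : aty) : ty :=
  match th with
  | Abool => Tbool
  | Aarrow th1 _ th2 => Tarrow (aerase th1) (aerase th2)
  end.

Inductive subty : aty -> aty -> Prop :=
| S_bool : subty Abool Abool
| S_arrow th1 th1' th2 th2' Pi1 Pi2 :
    subty th2 th1 -> subty th1' th2' -> psubset Pi1 Pi2 ->
    subty (Aarrow th1 Pi1 th1') (Aarrow th2 Pi2 th2').

Definition actx := list (var * aty).
Fixpoint alookup (G : actx) (x : var) : option aty :=
  match G with
  | nil => None
  | (y, th) :: G' => if Nat.eqb x y then Some th else alookup G' x
  end.
Definition cerase (G : actx) : ctx := map (fun yt => (fst yt, aerase (snd yt))) G.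

Inductive atyping : actx -> Principal -> expr -> aty -> pset -> Type :=
| A_true G n : atyping G n Etrue Abool pempty
| A_var G n x th : alookup G x = Some th -> atyping G n (Evar x) th pempty
| A_lam G n x e th1 th2 Pi :
    atyping ((x, th1) :: G) n e th2 Pi ->
    atyping G n (Elam x e) (Aarrow th1 Pi th2) pempty
| A_app G n e1 e2 th1 th1' th2 Pi Pi1 Pi2 :
    atyping G n e1 (Aarrow th1 Pi th2) Pi1 ->
    atyping G n e2 th1' Pi2 -> subty th1' th1 ->
    atyping G n (Eapp e1 e2) th2 (punion (punion Pi Pi1) Pi2)
| A_if G n e e1 e2 th Pi1 Pi2 Pi3 :
    atyping G n e Abool Pi1 -> atyping G n e1 th Pi2 -> atyping G n e2 th Pi3 ->
    atyping G n (Eif e e1 e2) th (punion (punion Pi1 Pi2) Pi3)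
| A_letrec G n f x e1 e2 th1 th2 th Pi Pi1 :
    atyping ((x, th1) :: (f, Aarrow th1 Pi th2) :: G) n e1 th2 Pi ->
    atyping ((f, Aarrow th1 Pi th2) :: G) n e2 th Pi1 ->
    atyping G n (Eletrec f x e1 e2) th (punion Pi Pi1)
| A_check G n p e th Pi :
    atyping G n e th Pi -> atyping G n (Echeck p e) th (punion Pi (psingle p))
| A_dopriv G n p e th Pi :
    atyping G n e th (pjoin n Pi p) -> atyping G n (Edopriv p e) th Pi
| A_signs G n n' e th Pi :
    atyping G n' e th Pi -> psubset Pi (A n') -> atyping G n (Esigns n' e) th Pi
| A_test G n p e1 e2 th Pi1 Pi2 :
    atyping G n e1 th Pi1 -> atyping G n e2 th Pi2 ->
    atyping G n (Etest p e1 e2) th (punion Pi1 Pi2).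

Lemma subty_erase th th' : subty th th' -> aerase th = aerase th'.
Proof. induction 1; simpl; congruence. Qed.

Lemma lookup_cerase G x th :
  alookup G x = Some th -> lookup (cerase G) x = Some (aerase th).
Proof.
  induction G as [|[y th0] G IH]; simpl; [discriminate|].
  destruct (Nat.eqb x y); [congruence|exact IH].
Qed.

Fixpoint erase_deriv G n e th Pi (d : atyping G n e th Pi) {struct d}
  : typing (cerase G) e (aerase th) :=
  match d in atyping G n e th Pi return typing (cerase G) e (aerase th) with
  | A_true _ _ => T_true _
  | A_var _ H => T_var (lookup_cerase H)
  | A_lam d1 => T_lam (erase_deriv d1)
  | A_app d1 d2 s =>
      T_app (erase_deriv d1) (eq_rect _ _ (erase_deriv d2) _ (subty_erase s))
  | A_if d0 d1 d2 => T_if (erase_deriv d0) (erase_deriv d1) (erase_deriv d2)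
  | A_letrec d1 d2 => T_letrec (erase_deriv d1) (erase_deriv d2)
  | @A_check _ _ p _ _ _ d1 => T_check p (erase_deriv d1)
  | @A_dopriv _ _ p _ _ _ d1 => T_dopriv p (erase_deriv d1)
  | @A_signs _ _ n' _ _ _ d1 _ => T_signs n' (erase_deriv d1)
  | @A_test _ _ p _ _ _ _ _ d1 d2 => T_test p (erase_deriv d1) (erase_deriv d2)
  end.

End Semantics.

Fixpoint safe (th : aty) : lifted (car (dom (aerase th))) -> Prop :=
  match th return lifted (car (dom (aerase th))) -> Prop with
  | Abool => fun u => match u with Star => False | _ => True end
  | Aarrow th1 Pi th2 => fun u =>
      match u with
      | Bot => True
      | Star => False
      | Val f => forall (P : pset) (d : car (dom (aerase th1))),
          psubset Pi P -> @safe th1 (Val d) -> @safe th2 (proj1_sig f P d)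
      end
  end.

Definition safe_env (G : actx) (h : env (cerase G)) : Prop :=
  forall x th (H : alookup G x = Some th),
    @safe th (Val (eq_rect _ lift_opt (h x) _ (lookup_cerase H))).

End Language.

From Stdlib Require Import Arith List Lia.
From Stdlib Require Import Classical ClassicalEpsilon FunctionalExtensionality ProofIrrelevance.

(* The proof is by induction on the analysis derivation, with [safe] read as
   a logical relation: a function value is safe when, run with at least its
   latent privileges and a safe argument, it returns a safe result.  Every
   case is direct except [letrec], whose meaning is the least fixed point
   picked by [epsilon].  To use it one shows that it is the lub of the
   Kleene iterates of the unfolding map; this needs the semantic domains to
   be ω-complete partial orders and the denotation to be monotone and
   continuous in the environment.  Safety then holds of the bottom function,
   is preserved by one unfolding, and is closed under lubs of chains. *)

Set Implicit Arguments.
Unset Strict Implicit.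
Arguments Bot {T}.
Arguments Star {T}.
Arguments Abool {Priv}.
Arguments Aarrow {Priv}.

Record po (C : preord) : Prop := {
  po_refl : forall x, @rel C x x;
  po_trans : forall x y z, @rel C x y -> @rel C y z -> @rel C x z;
  po_anti : forall x y, @rel C x y -> @rel C y x -> x = y }.

Definition complete (C : preord) : Prop :=
  forall c, @chain C c -> exists x, @is_lub C c x.

Lemma is_lub_ext (C : preord) (c c' : nat -> car C) x :
  (forall i, c i = c' i) -> is_lub c x -> is_lub c' x.
Proof.
  intros E [Hub Hleast]; split.
  - intros i; rewrite <- E; auto.
  - intros y Hy; apply Hleast; intros i; rewrite E; auto.
Qed.

Section PartialOrder.
Variables (C : preord) (HC : po C).

Lemma const_chain (a : car C) : chain (fun _ : nat => a).
Proof. intros i; apply (po_refl HC). Qed.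

Lemma chain_le (c : nat -> car C) : chain c -> forall i j, i <= j -> rel (c i) (c j).
Proof.
  intros Hc i j Hij; induction Hij.
  - apply (po_refl HC).
  - eapply (po_trans HC); eauto.
Qed.

Lemma is_lub_unique (c : nat -> car C) x y : is_lub c x -> is_lub c y -> x = y.
Proof. intros [Hx Hx'] [Hy Hy']; apply (po_anti HC); auto. Qed.

Lemma is_lub_const (x : car C) : is_lub (fun _ : nat => x) x.
Proof. split; [intros; apply (po_refl HC) | intros y Hy; apply (Hy 0)]. Qed.

Lemma is_lub_shift (c : nat -> car C) k x :
  chain c -> is_lub c x <-> is_lub (fun i => c (i + k)) x.
Proof.
  intros Hc; split; intros [Hub Hleast]; split; auto.
  - intros y Hy; apply Hleast; intros i.
    eapply (po_trans HC); [apply (chain_le Hc (j := i + k)); lia | apply Hy].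
  - intros i; eapply (po_trans HC); [apply (chain_le Hc (j := i + k)); lia | apply Hub].
Qed.

Lemma is_lub_swap (a : nat -> nat -> car C) r q x :
  (forall i, is_lub (fun j => a i j) (r i)) ->
  (forall j, is_lub (fun i => a i j) (q j)) ->
  is_lub r x -> is_lub q x.
Proof.
  intros Hr Hq [Hub Hleast]; split.
  - intros j; apply (Hq j); intros i.
    eapply (po_trans HC); [apply (Hr i) | apply Hub].
  - intros y Hy; apply Hleast; intros i; apply (Hr i); intros j.
    eapply (po_trans HC); [apply (Hq j) | apply Hy].
Qed.

Lemma is_lub_diag (a : nat -> nat -> car C) r x :
  (forall i j, rel (a i j) (a (S i) j)) -> (forall i j, rel (a i j) (a i (S j))) ->
  (forall i, is_lub (fun j => a i j) (r i)) -> is_lub r x ->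
  is_lub (fun i => a i i) x.
Proof.
  intros Hi Hj Hr [Hub Hleast].
  assert (Hmono : forall i j i' j', i <= i' -> j <= j' -> rel (a i j) (a i' j')).
  { intros i j i' j' Hii' Hjj'. eapply (po_trans HC).
    - apply (chain_le (c := fun i => a i j)); [intros k; apply Hi | exact Hii'].
    - apply (chain_le (c := fun j => a i' j)); [intros k; apply Hj | exact Hjj']. }
  split.
  - intros i; eapply (po_trans HC); [apply (Hr i) | apply Hub].
  - intros y Hy; apply Hleast; intros i; apply (Hr i); intros j.
    eapply (po_trans HC); [apply (Hmono i j (max i j) (max i j)); lia | apply Hy].
Qed.

End PartialOrder.

Section Lifting.
Variables (C : preord) (HC : po C).

Lemma lift_le_bot_inv (w : lifted (car C)) : lift_le w Bot -> w = Bot.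
Proof. intros [H | [H | (a & b & H1 & H2 & H3)]]; auto; discriminate. Qed.

Lemma lift_le_star_inv (w : lifted (car C)) : lift_le Star w -> w = Star.
Proof. intros [H | [H | (a & b & H1 & H2 & H3)]]; auto; discriminate. Qed.

Lemma lift_le_val_inv (a : car C) w :
  lift_le (Val a) w -> exists b, w = Val b /\ rel a b.
Proof.
  intros [H | [H | (a' & b & H1 & H2 & H3)]]; try discriminate.
  - subst; exists a; split; [reflexivity | apply (po_refl HC)].
  - injection H1; intros; subst; eauto.
Qed.

Lemma lift_le_val (a b : car C) : lift_le (Val a) (Val b) <-> rel a b.
Proof.
  split.
  - intros H; destruct (lift_le_val_inv H) as (b' & E & R); injection E; intros; subst; auto.
  - intros R; right; right; eauto.
Qed.

Lemma po_lift : po (lift C).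
Proof.
  constructor; simpl.
  - intros x; right; left; reflexivity.
  - intros x y z Hxy Hyz; destruct x as [| | a].
    + left; reflexivity.
    + apply lift_le_star_inv in Hxy; subst; exact Hyz.
    + destruct (lift_le_val_inv Hxy) as (b & -> & Rab).
      destruct (lift_le_val_inv Hyz) as (c & -> & Rbc).
      apply lift_le_val; eapply (po_trans HC); eauto.
  - intros x y Hxy Hyx; destruct x as [| | a].
    + symmetry; apply lift_le_bot_inv; exact Hyx.
    + symmetry; apply lift_le_star_inv; exact Hxy.
    + destruct (lift_le_val_inv Hxy) as (b & -> & Rab).
      f_equal; apply (po_anti HC); auto; apply lift_le_val; exact Hyx.
Qed.

Lemma lift_chain_cases (u : nat -> lifted (car C)) : @chain (lift C) u ->
  (forall i, u i = Bot) \/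
  (exists k, forall i, u (i + k) = Star) \/
  (exists k (c : nat -> car C), chain c /\ forall i, u (i + k) = Val (c i)).
Proof.
  intros Hu.
  destruct (classic (forall i, u i = Bot)) as [Hbot | Hbot]; [left; exact Hbot | right].
  apply not_all_ex_not in Hbot; destruct Hbot as (k & Hk).
  assert (Hle : forall i, lift_le (u k) (u (i + k))).
  { intros i; apply (chain_le po_lift Hu); lia. }
  destruct (u k) as [| | a0] eqn:E; [congruence | left | right].
  - exists k; intros i; apply lift_le_star_inv, Hle.
  - set (c i := match u (i + k) with Val b => b | _ => a0 end).
    assert (Hc : forall i, u (i + k) = Val (c i)).
    { intros i; unfold c.
      destruct (lift_le_val_inv (Hle i)) as (b & Hb & _); rewrite Hb; reflexivity. }
    exists k, c; split; [| exact Hc].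
    intros i; apply lift_le_val; rewrite <- Hc, <- Hc; apply (Hu (i + k)).
Qed.

Lemma is_lub_val (c : nat -> car C) a :
  is_lub c a -> @is_lub (lift C) (fun i => Val (c i)) (Val a).
Proof.
  intros [Hub Hleast]; split.
  - intros i; apply lift_le_val, Hub.
  - intros y Hy; destruct (lift_le_val_inv (Hy 0)) as (b & -> & _).
    apply lift_le_val, Hleast; intros i; apply lift_le_val, Hy.
Qed.

Lemma is_lub_val_inv (c : nat -> car C) w :
  @is_lub (lift C) (fun i => Val (c i)) w -> exists a, w = Val a /\ is_lub c a.
Proof.
  intros [Hub Hleast]; destruct (lift_le_val_inv (Hub 0)) as (a & -> & _).
  exists a; split; [reflexivity | split].
  - intros i; apply lift_le_val, Hub.
  - intros y Hy; apply lift_le_val, Hleast; intros i; apply lift_le_val, Hy.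
Qed.

Lemma is_lub_lift_cases (u : nat -> lifted (car C)) w :
  @chain (lift C) u -> @is_lub (lift C) u w ->
  ((forall i, u i = Bot) /\ w = Bot) \/
  ((exists k, forall i, u (i + k) = Star) /\ w = Star) \/
  (exists k (c : nat -> car C) a,
     chain c /\ (forall i, u (i + k) = Val (c i)) /\ is_lub c a /\ w = Val a).
Proof.
  intros Hu Hw.
  destruct (lift_chain_cases Hu) as [Hbot | [(k & Hstar) | (k & c & Hc & Hval)]].
  - left; split; [exact Hbot |].
    apply (is_lub_unique po_lift Hw), (is_lub_ext (C := lift C) (c := fun _ => Bot)); [auto |].
    apply (is_lub_const po_lift).
  - right; left; split; [exists k; exact Hstar |].
    apply (is_lub_shift po_lift k) in Hw; [| exact Hu].
    apply (is_lub_unique po_lift Hw), (is_lub_ext (C := lift C) (c := fun _ => Star)); [auto |].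
    apply (is_lub_const po_lift).
  - right; right.
    apply (is_lub_shift po_lift k) in Hw; [| exact Hu].
    apply (is_lub_ext (C := lift C) (c' := fun i => Val (c i)) Hval) in Hw.
    destruct (is_lub_val_inv Hw) as (a & -> & Ha).
    exists k, c, a; auto.
Qed.

Lemma complete_lift : complete C -> complete (lift C).
Proof.
  intros Hcomp u Hu.
  destruct (lift_chain_cases Hu) as [Hbot | [(k & Hstar) | (k & c & Hc & Hval)]].
  - exists Bot; apply (is_lub_ext (C := lift C) (c := fun _ => Bot)); [auto |].
    apply (is_lub_const po_lift).
  - exists Star; apply (is_lub_shift po_lift k Star Hu).
    apply (is_lub_ext (C := lift C) (c := fun _ => Star)); [auto | apply (is_lub_const po_lift)].
  - destruct (Hcomp c Hc) as (a & Ha).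
    exists (Val a); apply (is_lub_shift po_lift k (Val a) Hu).
    apply (is_lub_ext (C := lift C) (c := fun i => Val (c i))); [auto | apply is_lub_val, Ha].
Qed.

End Lifting.

Definition bind {X Y : Type} (u : lifted X) (g : X -> lifted Y) : lifted Y :=
  match u with Bot => Bot | Star => Star | Val v => g v end.

Section Bind.
Variables (C E : preord) (HC : po C) (HE : po E).

Lemma bind_mono (u u' : lifted (car C)) (g g' : car C -> lifted (car E)) :
  lift_le u u' -> (forall a, lift_le (g a) (g' a)) ->
  (forall a b, rel a b -> lift_le (g' a) (g' b)) ->
  lift_le (bind u g) (bind u' g').
Proof.
  intros Hu Hg Hg'; destruct u as [| | a]; simpl.
  - left; reflexivity.
  - apply lift_le_star_inv in Hu; subst; apply (po_refl (po_lift HE)).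
  - destruct (lift_le_val_inv HC Hu) as (b & -> & Rab); simpl.
    eapply (po_trans (po_lift HE)); [apply Hg | apply Hg', Rab].
Qed.

Lemma bind_is_lub (u : nat -> lifted (car C)) w
  (gs : nat -> car C -> lifted (car E)) (g : car C -> lifted (car E)) :
  @chain (lift C) u -> @is_lub (lift C) u w ->
  (forall i a b, rel a b -> lift_le (gs i a) (gs i b)) ->
  (forall i a, lift_le (gs i a) (gs (S i) a)) ->
  (forall a, @is_lub (lift E) (fun i => gs i a) (g a)) ->
  (forall c a, chain c -> is_lub c a -> @is_lub (lift E) (fun i => g (c i)) (g a)) ->
  @is_lub (lift E) (fun i => bind (u i) (gs i)) (bind w g).
Proof.
  intros Hu Hw Hgs_mono Hgs_chain Hgs_lub Hg_cont.
  assert (Hs : @chain (lift E) (fun i => bind (u i) (gs i))).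
  { intros i; apply bind_mono; auto; apply Hu. }
  destruct (is_lub_lift_cases HC Hu Hw)
    as [(Hbot & ->) | [((k & Hstar) & ->) | (k & c & a & Hc & Hval & Ha & ->)]]; simpl.
  - apply (is_lub_ext (C := lift E) (c := fun _ => Bot)).
    + intros i; rewrite Hbot; reflexivity.
    + apply (is_lub_const (po_lift HE)).
  - apply (is_lub_shift (po_lift HE) k Star Hs).
    apply (is_lub_ext (C := lift E) (c := fun _ => Star)).
    + intros i; rewrite Hstar; reflexivity.
    + apply (is_lub_const (po_lift HE)).
  - apply (is_lub_shift (po_lift HE) k (g a) Hs).
    apply (is_lub_ext (C := lift E) (c := fun i => gs (i + k) (c i))).
    { intros i; rewrite Hval; reflexivity. }
    apply (is_lub_diag (po_lift HE) (a := fun i j => gs (j + k) (c i)) (r := fun i => g (c i))).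
    + intros i j; apply Hgs_mono, Hc.
    + intros i j; apply Hgs_chain.
    + intros i; apply (is_lub_shift (po_lift HE) k (c := fun j => gs j (c i))).
      * intros j; apply Hgs_chain.
      * apply Hgs_lub.
    + apply Hg_cont; auto.
Qed.

End Bind.

Section FunctionSpace.
Variables (Priv : Type) (C E : preord) (HE : po E).

Lemma po_funspace : po (funspace Priv C E).
Proof.
  pose proof (po_lift HE) as HL; constructor; simpl.
  - intros f P d; apply (po_refl HL).
  - intros f g h Hfg Hgh P d; eapply (po_trans HL); [apply Hfg | apply Hgh].
  - intros [f Hf] [g Hg] Hfg Hgf; simpl in *.
    assert (f = g) as <-.
    { apply functional_extensionality; intros P; apply functional_extensionality; intros d.
      apply (po_anti HL); [apply Hfg | apply Hgf]. }
    f_equal; apply proof_irrelevance.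
Qed.

Lemma is_lub_funspace (c : nat -> car (funspace Priv C E)) (f : car (funspace Priv C E)) :
  (forall P d, @is_lub (lift E) (fun i => proj1_sig (c i) P d) (proj1_sig f P d)) ->
  is_lub c f.
Proof.
  intros Hf; split.
  - intros i P d; apply (Hf P d).
  - intros g Hg P d; apply (Hf P d); intros i; apply Hg.
Qed.

Section Complete.
Hypothesis HcE : complete E.

(* Pointwise lubs are continuous because lubs of a double sequence commute. *)
Lemma chain_funspace_pointwise_lub (c : nat -> car (funspace Priv C E)) :
  chain c -> exists f : car (funspace Priv C E),
    forall P d, @is_lub (lift E) (fun i => proj1_sig (c i) P d) (proj1_sig f P d).
Proof.
  pose proof (po_lift HE) as HL; intros Hc.
  assert (Hex : forall P d, exists w, @is_lub (lift E) (fun i => proj1_sig (c i) P d) w).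
  { intros P d; apply (complete_lift HE HcE); intros i; apply Hc. }
  set (F P d := proj1_sig (constructive_indefinite_description _ (Hex P d))).
  assert (HF : forall P d, @is_lub (lift E) (fun i => proj1_sig (c i) P d) (F P d)).
  { intros P d; exact (proj2_sig (constructive_indefinite_description _ (Hex P d))). }
  assert (Hcont : forall P, continuous (C := C) (E := lift E) (F P)).
  { intros P; split.
    - intros x y Rxy; apply (HF P x); intros i; eapply (po_trans HL).
      + apply (proj1 (proj2_sig (c i) P)); exact Rxy.
      + apply (HF P y).
    - intros cc x Hcc Hx.
      apply (is_lub_swap HL (a := fun i j => proj1_sig (c i) P (cc j))
                            (r := fun i => proj1_sig (c i) P x)).
      + intros i; apply (proj2 (proj2_sig (c i) P)); auto.
      + intros j; apply HF.
      + apply HF. }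
  exists (exist _ F Hcont); exact HF.
Qed.

Lemma complete_funspace : complete (funspace Priv C E).
Proof.
  intros c Hc; destruct (chain_funspace_pointwise_lub Hc) as (f & Hf).
  exists f; apply is_lub_funspace, Hf.
Qed.

Lemma is_lub_funspace_apply (c : nat -> car (funspace Priv C E)) f :
  chain c -> is_lub c f ->
  forall P d, @is_lub (lift E) (fun i => proj1_sig (c i) P d) (proj1_sig f P d).
Proof.
  intros Hc Hf; destruct (chain_funspace_pointwise_lub Hc) as (g & Hg).
  replace f with g; [exact Hg |].
  apply (is_lub_unique po_funspace (c := c)); [apply is_lub_funspace, Hg | exact Hf].
Qed.

End Complete.
End FunctionSpace.

Section Domains.
Variable Priv : Type.

Lemma po_complete_dom t : po (dom Priv t) /\ complete (dom Priv t).
Proof.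
  induction t as [| t1 _ t2 [Hpo Hcomp]]; simpl.
  - split.
    + constructor; simpl; congruence.
    + intros c Hc; exists (c 0).
      assert (Hconst : forall i, c i = c 0).
      { induction i as [| i IH]; [reflexivity | rewrite <- IH; symmetry; apply Hc]. }
      split; simpl; [auto | intros y Hy; rewrite <- (Hy 0); auto].
  - split; [apply po_funspace | apply complete_funspace]; auto.
Qed.

Lemma po_dom t : po (dom Priv t).
Proof. exact (proj1 (po_complete_dom t)). Qed.

Lemma complete_dom t : complete (dom Priv t).
Proof. exact (proj2 (po_complete_dom t)). Qed.

Lemma po_lift_dom t : po (lift (dom Priv t)).
Proof. exact (po_lift (po_dom t)). Qed.

Lemma is_lub_bool (c : nat -> car (dom Priv Tbool)) a : is_lub c a -> forall i, c i = a.
Proof. intros [Hub _] i; apply Hub. Qed.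

End Domains.

Section Environments.
Variable Priv : Type.

Definition rel_opt (o : option ty) : lift_opt Priv o -> lift_opt Priv o -> Prop :=
  match o with
  | Some t => fun a b => @rel (dom Priv t) a b
  | None => fun _ _ => True
  end.

Definition lub_opt (o : option ty) : (nat -> lift_opt Priv o) -> lift_opt Priv o -> Prop :=
  match o with
  | Some t => fun c a => @is_lub (dom Priv t) c a
  | None => fun _ _ => True
  end.

Definition env_le D (h h' : env Priv D) : Prop := forall x, rel_opt (h x) (h' x).
Definition env_chain D (c : nat -> env Priv D) : Prop := forall i, env_le (c i) (c (S i)).
Definition env_lub D (c : nat -> env Priv D) (h : env Priv D) : Prop :=
  forall x, lub_opt (fun i => c i x) (h x).

Lemma env_le_refl D (h : env Priv D) : env_le h h.
Proof.
  intros x; generalize (h x); destruct (lookup D x); simpl; auto.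
  intros; apply (po_refl (po_dom Priv t)).
Qed.

Lemma env_chain_const D (h : env Priv D) : env_chain (fun _ => h).
Proof. intros i; apply env_le_refl. Qed.

Lemma env_lub_const D (h : env Priv D) : env_lub (fun _ => h) h.
Proof.
  intros x; generalize (h x); destruct (lookup D x); simpl; auto.
  intros; apply (is_lub_const (po_dom Priv t)).
Qed.

Lemma env_le_upd D (h h' : env Priv D) x t (a a' : car (dom Priv t)) :
  env_le h h' -> rel a a' -> env_le (upd h x a) (upd h' x a').
Proof. intros Hh Ha y; unfold upd; simpl; destruct (Nat.eqb y x); simpl; auto. Qed.

Lemma env_chain_upd D (c : nat -> env Priv D) x t (ca : nat -> car (dom Priv t)) :
  env_chain c -> chain ca -> env_chain (fun i => upd (c i) x (ca i)).
Proof. intros Hc Hca i; apply env_le_upd; auto. Qed.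

Lemma env_lub_upd D (c : nat -> env Priv D) h x t (ca : nat -> car (dom Priv t)) a :
  env_lub c h -> is_lub ca a -> env_lub (fun i => upd (c i) x (ca i)) (upd h x a).
Proof. intros Hc Ha y; unfold upd; simpl; destruct (Nat.eqb y x); simpl; auto. Qed.

Lemma rel_opt_cast (o : option ty) t (H : o = Some t) (a b : lift_opt Priv o) :
  rel_opt a b ->
  @rel (dom Priv t) (eq_rect o (lift_opt Priv) a _ H) (eq_rect o (lift_opt Priv) b _ H).
Proof. subst; auto. Qed.

Lemma lub_opt_cast (o : option ty) t (H : o = Some t) (c : nat -> lift_opt Priv o) a :
  lub_opt c a ->
  @is_lub (dom Priv t) (fun i => eq_rect o (lift_opt Priv) (c i) _ H)
    (eq_rect o (lift_opt Priv) a _ H).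
Proof. subst; auto. Qed.

End Environments.

Lemma mk_fun_apply (Priv : Type) (C E : preord) (f : pset Priv -> car C -> lifted (car E)) :
  (forall P, continuous (C := C) (E := lift E) (f P)) ->
  forall P d, proj1_sig (mk_fun f) P d = f P d.
Proof.
  intros Hf P d; unfold mk_fun.
  destruct excluded_middle_informative; [reflexivity | contradiction].
Qed.

Lemma lfp_is_lub_iter (C : preord) (HC : po C) (b : car C) (Hb : forall x, rel b x)
  (i : inhabited (car C)) (G : car C -> car C) :
  (forall x y, rel x y -> rel (G x) (G y)) ->
  (forall c x, chain c -> is_lub c x -> is_lub (fun k => G (c k)) (G x)) ->
  chain (fun k => Nat.iter k G b) /\
  forall K, is_lub (fun k => Nat.iter k G b) K -> lfp i G = K.
Proof.
  intros Hmono Hcont.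
  assert (Hchain : chain (fun k => Nat.iter k G b)).
  { intros k; induction k as [| k IH]; simpl; [apply Hb | apply Hmono, IH]. }
  split; [exact Hchain |]; intros K HK.
  assert (Hfix : G K = K).
  { apply (is_lub_unique HC (Hcont _ _ Hchain HK)).
    apply (is_lub_ext (c := fun k => Nat.iter (k + 1) G b)).
    - intros k; rewrite Nat.add_1_r; reflexivity.
    - apply (is_lub_shift HC 1 K Hchain), HK. }
  assert (Hleast : forall g, G g = g -> rel K g).
  { intros g Hg; apply HK; intros k; induction k as [| k IH]; simpl; [apply Hb |].
    rewrite <- Hg; apply Hmono, IH. }
  unfold lfp.
  destruct (epsilon_spec i (fun g => G g = g /\ forall g', G g' = g' -> rel g g'))
    as [Heps_fix Heps_least]; [exists K; auto |].
  apply (po_anti HC); auto.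
Qed.

Section Application.
Variables (Priv : Type) (t1 t2 : ty).
Notation Fun := (car (dom Priv (Tarrow t1 t2))).

Lemma bind_apply_mono (P : pset Priv) (u u' : lifted (car (dom Priv t1))) (F F' : Fun) :
  lift_le u u' -> rel F F' ->
  lift_le (bind u (proj1_sig F P)) (bind u' (proj1_sig F' P)).
Proof.
  intros Hu HF; apply (bind_mono (po_dom Priv t1) (po_dom Priv t2)); auto.
  intros a b Rab; apply (proj1 (proj2_sig F' P)), Rab.
Qed.

Lemma bind_apply_is_lub_arg (P : pset Priv) (F : Fun) (u : nat -> lifted (car (dom Priv t1))) w :
  @chain (lift _) u -> @is_lub (lift _) u w ->
  @is_lub (lift _) (fun i => bind (u i) (proj1_sig F P)) (bind w (proj1_sig F P)).
Proof.
  intros Hu Hw.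
  apply (bind_is_lub (po_dom Priv t1) (po_dom Priv t2) (gs := fun _ => proj1_sig F P)); auto.
  - intros _ a b Rab; apply (proj1 (proj2_sig F P)), Rab.
  - intros; apply (po_refl (po_lift_dom Priv t2)).
  - intros; apply (is_lub_const (po_lift_dom Priv t2)).
  - intros c a Hc Ha; apply (proj2 (proj2_sig F P)); auto.
Qed.

Lemma bind_apply_is_lub_fun (P : pset Priv) (u : lifted (car (dom Priv t1)))
  (cF : nat -> Fun) (F : Fun) :
  chain cF -> is_lub cF F ->
  @is_lub (lift _) (fun i => bind u (proj1_sig (cF i) P)) (bind u (proj1_sig F P)).
Proof.
  intros HcF HF.
  apply (bind_is_lub (po_dom Priv t1) (po_dom Priv t2) (u := fun _ => u)
           (gs := fun i => proj1_sig (cF i) P)).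
  - apply (const_chain (po_lift_dom Priv t1)).
  - apply (is_lub_const (po_lift_dom Priv t1)).
  - intros i a b Rab; apply (proj1 (proj2_sig (cF i) P)), Rab.
  - intros i a; apply HcF.
  - apply (is_lub_funspace_apply (po_dom Priv t2) (@complete_dom Priv t2) HcF HF).
  - intros c a Hc Ha; apply (proj2 (proj2_sig F P)); auto.
Qed.

End Application.

Section Continuity.
Variables (Principal Priv : Type) (A : Principal -> pset Priv).

Definition den_monotone D e t (d : typing D e t) : Prop :=
  forall n P (h h' : env Priv D), env_le h h' -> lift_le (den A d n P h) (den A d n P h').

Definition den_continuous D e t (d : typing D e t) : Prop :=
  forall n P (c : nat -> env Priv D) h, env_chain c -> env_lub c h ->
    @is_lub (lift (dom Priv t)) (fun i => den A d n P (c i)) (den A d n P h).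

Section Body.
Variables (D : ctx) (x : var) (t1 t2 : ty) (e : expr Principal Priv)
  (d : typing ((x, t1) :: D) e t2).
Hypotheses (Hmono : den_monotone d) (Hcont : den_continuous d).

Lemma den_upd_continuous n (h : env Priv D) P :
  continuous (C := dom Priv t1) (E := lift (dom Priv t2)) (fun v => den A d n P (upd h x v)).
Proof.
  split.
  - intros v v' Rv; apply Hmono, env_le_upd; [apply env_le_refl | exact Rv].
  - intros cv v Hcv Hv; apply Hcont.
    + apply env_chain_upd; [apply env_chain_const | exact Hcv].
    + apply env_lub_upd; [apply env_lub_const | exact Hv].
Qed.

Lemma den_lam_apply n (h : env Priv D) (P' : pset Priv) v :
  proj1_sig (mk_fun (C := dom Priv t1) (E := dom Priv t2)
               (fun P' v => den A d n P' (upd h x v))) P' v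
  = den A d n P' (upd h x v).
Proof. apply mk_fun_apply; intros; apply den_upd_continuous. Qed.

Lemma den_scott_lam : den_monotone (T_lam d) /\ den_continuous (T_lam d).
Proof.
  split.
  - intros n P h h' Hh; cbn [den]; apply (lift_le_val (po_dom Priv (Tarrow t1 t2))); intros P' v.
    rewrite !den_lam_apply; apply Hmono, env_le_upd; [exact Hh | apply (po_refl (po_dom Priv t1))].
  - intros n P c h Hc Hh; cbn [den]; apply (is_lub_val (po_dom Priv (Tarrow t1 t2))).
    apply is_lub_funspace; intros P' v; rewrite den_lam_apply.
    apply (is_lub_ext (C := lift (dom Priv t2)) (c := fun i => den A d n P' (upd (c i) x v))).
    { intros i; rewrite den_lam_apply; reflexivity. }
    apply Hcont.
    + apply env_chain_upd; [exact Hc | apply (const_chain (po_dom Priv t1))].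
    + apply env_lub_upd; [exact Hh | apply (is_lub_const (po_dom Priv t1))].
Qed.

End Body.

Lemma den_scott_if D e e1 e2 t
  (d0 : typing D e Tbool) (d1 : typing D e1 t) (d2 : typing D e2 t) :
  den_monotone d0 -> den_continuous d0 -> den_monotone d1 -> den_continuous d1 ->
  den_monotone d2 -> den_continuous d2 ->
  den_monotone (T_if d0 d1 d2) /\ den_continuous (T_if d0 d1 d2).
Proof.
  intros M0 C0 M1 C1 M2 C2.
  pose (branch n P h (b : bool) := if b then den A d1 n P h else den A d2 n P h).
  split.
  - intros n P h h' Hh.
    change (lift_le (bind (den A d0 n P h) (branch n P h))
                    (bind (den A d0 n P h') (branch n P h'))).
    apply (bind_mono (po_dom Priv Tbool) (po_dom Priv t)); auto.
    + intros [|]; [apply M1 | apply M2]; exact Hh.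
    + intros a b Rab; simpl in Rab; subst; apply (po_refl (po_lift_dom Priv t)).
  - intros n P c h Hc Hh.
    change (@is_lub (lift (dom Priv t)) (fun i => bind (den A d0 n P (c i)) (branch n P (c i)))
              (bind (den A d0 n P h) (branch n P h))).
    apply (bind_is_lub (po_dom Priv Tbool) (po_dom Priv t) (gs := fun i => branch n P (c i))); auto.
    + intros i; apply M0, Hc.
    + intros i a b Rab; simpl in Rab; subst; apply (po_refl (po_lift_dom Priv t)).
    + intros i [|]; [apply M1 | apply M2]; apply Hc.
    + intros [|]; [apply C1 | apply C2]; auto.
    + intros cb b Hcb Hb.
      apply (is_lub_ext (C := lift (dom Priv t)) (c := fun _ => branch n P h b)).
      { intros i; rewrite (is_lub_bool Hb); reflexivity. }
      apply (is_lub_const (po_lift_dom Priv t)).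
Qed.

Lemma den_scott_app D e1 e2 t1 t2 (d1 : typing D e1 (Tarrow t1 t2)) (d2 : typing D e2 t1) :
  den_monotone d1 -> den_continuous d1 -> den_monotone d2 -> den_continuous d2 ->
  den_monotone (T_app d1 d2) /\ den_continuous (T_app d1 d2).
Proof.
  intros M1 C1 M2 C2; split.
  - intros n P h h' Hh.
    change (lift_le (bind (den A d1 n P h) (fun F => bind (den A d2 n P h) (proj1_sig F P)))
                    (bind (den A d1 n P h') (fun F => bind (den A d2 n P h') (proj1_sig F P)))).
    apply (bind_mono (po_dom Priv (Tarrow t1 t2)) (po_dom Priv t2)); auto.
    + intros F; apply bind_apply_mono; auto; apply (po_refl (po_dom Priv (Tarrow t1 t2))).
    + intros F F' RF; apply bind_apply_mono; auto; apply (po_refl (po_lift_dom Priv t1)).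
  - intros n P c h Hc Hh.
    change (@is_lub (lift (dom Priv t2))
              (fun i => bind (den A d1 n P (c i)) (fun F => bind (den A d2 n P (c i)) (proj1_sig F P)))
              (bind (den A d1 n P h) (fun F => bind (den A d2 n P h) (proj1_sig F P)))).
    apply (bind_is_lub (po_dom Priv (Tarrow t1 t2)) (po_dom Priv t2)
             (gs := fun i F => bind (den A d2 n P (c i)) (proj1_sig F P))); auto.
    + intros i; apply M1, Hc.
    + intros i F F' RF; apply bind_apply_mono; auto; apply (po_refl (po_lift_dom Priv t1)).
    + intros i F; apply bind_apply_mono; [apply M2, Hc |].
      apply (po_refl (po_dom Priv (Tarrow t1 t2))).
    + intros F; apply bind_apply_is_lub_arg; auto; intros i; apply M2, Hc.
    + intros cF F HcF HF; apply bind_apply_is_lub_fun; auto.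
Qed.

End Continuity.

Section Recursion.
Variables (Principal Priv : Type) (A : Principal -> pset Priv).
Variables (D : ctx) (f x : var) (e1 : expr Principal Priv) (t1 t2 : ty)
  (d1 : typing ((x, t1) :: (f, Tarrow t1 t2) :: D) e1 t2).
Notation Fun := (dom Priv (Tarrow t1 t2)).

Definition rec_step n (h : env Priv D) (g : car Fun) : car Fun :=
  mk_fun (C := dom Priv t1) (E := dom Priv t2)
    (fun P' v => den A d1 n P' (upd (upd h f (t := Tarrow t1 t2) g) x v)).

Definition rec_fix n (h : env Priv D) : car Fun :=
  lfp (inhabits (botfun Priv (dom Priv t1) (dom Priv t2))) (rec_step n h).

Definition rec_iter n (h : env Priv D) (k : nat) : car Fun :=
  Nat.iter k (rec_step n h) (botfun Priv (dom Priv t1) (dom Priv t2)).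

Lemma den_letrec e2 t (d2 : typing ((f, Tarrow t1 t2) :: D) e2 t) n P h :
  den A (T_letrec d1 d2) n P h = den A d2 n P (upd h f (t := Tarrow t1 t2) (rec_fix n h)).
Proof. reflexivity. Qed.

Lemma botfun_le (g : car Fun) : @rel Fun (botfun Priv _ _) g.
Proof. intros P d; left; reflexivity. Qed.

Hypotheses (Hmono : den_monotone A d1) (Hcont : den_continuous A d1).

Lemma rec_step_apply n h g P v :
  proj1_sig (rec_step n h g) P v = den A d1 n P (upd (upd h f (t := Tarrow t1 t2) g) x v).
Proof. apply den_lam_apply; auto. Qed.

Lemma rec_step_mono n h h' g g' :
  env_le h h' -> rel g g' -> @rel Fun (rec_step n h g) (rec_step n h' g').
Proof.
  intros Hh Hg P v; rewrite !rec_step_apply.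
  apply Hmono, env_le_upd; [apply env_le_upd; auto | apply (po_refl (po_dom Priv t1))].
Qed.

Lemma rec_step_is_lub n c h cg g : env_chain c -> env_lub c h -> chain cg -> is_lub cg g ->
  @is_lub Fun (fun i => rec_step n (c i) (cg i)) (rec_step n h g).
Proof.
  intros Hc Hh Hcg Hg; apply is_lub_funspace; intros P v; rewrite rec_step_apply.
  apply (is_lub_ext (C := lift (dom Priv t2))
           (c := fun i => den A d1 n P (upd (upd (c i) f (t := Tarrow t1 t2) (cg i)) x v))).
  { intros i; rewrite rec_step_apply; reflexivity. }
  apply Hcont.
  - apply env_chain_upd; [apply env_chain_upd; auto | apply (const_chain (po_dom Priv t1))].
  - apply env_lub_upd; [apply env_lub_upd; auto | apply (is_lub_const (po_dom Priv t1))].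
Qed.

Lemma rec_fix_is_lub_iter n h : chain (rec_iter n h) /\ is_lub (rec_iter n h) (rec_fix n h).
Proof.
  destruct (lfp_is_lub_iter (po_dom Priv (Tarrow t1 t2)) botfun_le
              (inhabits (botfun Priv (dom Priv t1) (dom Priv t2))) (G := rec_step n h))
    as [Hchain Hlfp].
  - intros g g' Hg; apply rec_step_mono; [apply env_le_refl | exact Hg].
  - intros cg g Hcg Hg; apply rec_step_is_lub; auto; [apply env_chain_const | apply env_lub_const].
  - split; [exact Hchain |].
    destruct (complete_dom Hchain) as (K & HK).
    replace (rec_fix n h) with K by (symmetry; exact (Hlfp K HK)); exact HK.
Qed.

Lemma rec_iter_mono n h h' k : env_le h h' -> rel (rec_iter n h k) (rec_iter n h' k).
Proof.
  intros Hh; induction k as [| k IH]; [apply botfun_le | apply rec_step_mono; auto].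
Qed.

Lemma rec_fix_mono n h h' : env_le h h' -> rel (rec_fix n h) (rec_fix n h').
Proof.
  intros Hh; apply (rec_fix_is_lub_iter n h); intros k.
  eapply (po_trans (po_dom Priv (Tarrow t1 t2))).
  - apply rec_iter_mono, Hh.
  - apply (rec_fix_is_lub_iter n h').
Qed.

Lemma rec_fix_is_lub n c h :
  env_chain c -> env_lub c h -> is_lub (fun i => rec_fix n (c i)) (rec_fix n h).
Proof.
  intros Hc Hh.
  apply (is_lub_swap (po_dom Priv (Tarrow t1 t2))
           (a := fun k i => rec_iter n (c i) k) (r := fun k => rec_iter n h k)).
  - intros k; induction k as [| k IH].
    + exact (is_lub_const (po_dom Priv (Tarrow t1 t2)) (botfun Priv _ _)).
    + change (is_lub (fun i => rec_step n (c i) (rec_iter n (c i) k))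
                     (rec_step n h (rec_iter n h k))).
      apply rec_step_is_lub; auto; intros i; apply rec_iter_mono, Hc.
  - intros i; apply rec_fix_is_lub_iter.
  - apply rec_fix_is_lub_iter.
Qed.

Lemma den_scott_letrec e2 t (d2 : typing ((f, Tarrow t1 t2) :: D) e2 t) :
  den_monotone A d2 -> den_continuous A d2 ->
  den_monotone A (T_letrec d1 d2) /\ den_continuous A (T_letrec d1 d2).
Proof.
  intros M2 C2; split.
  - intros n P h h' Hh; rewrite !den_letrec.
    apply M2, env_le_upd; [exact Hh | apply rec_fix_mono, Hh].
  - intros n P c h Hc Hh; rewrite den_letrec.
    apply (is_lub_ext (C := lift (dom Priv t))
             (c := fun i => den A d2 n P (upd (c i) f (t := Tarrow t1 t2) (rec_fix n (c i))))).
    { intros i; rewrite den_letrec; reflexivity. }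
    apply C2.
    + apply env_chain_upd; [exact Hc | intros i; apply rec_fix_mono, Hc].
    + apply env_lub_upd; [exact Hh | apply rec_fix_is_lub; auto].
Qed.

End Recursion.

Section Scott.
Variables (Principal Priv : Type) (A : Principal -> pset Priv).

Theorem den_scott D e t (d : typing D e t) : den_monotone A d /\ den_continuous A d.
Proof.
  induction d.
  - split; intros n P; intros; simpl.
    + apply (po_refl (po_lift_dom Priv Tbool)).
    + apply (is_lub_const (po_lift_dom Priv Tbool)).
  - split.
    + intros n P h h' Hh; cbn [den]; apply (lift_le_val (po_dom Priv t)), rel_opt_cast, Hh.
    + intros n P c h Hc Hh; cbn [den]; apply (is_lub_val (po_dom Priv t)), lub_opt_cast, Hh.
  - destruct IHd1, IHd2, IHd3; apply den_scott_if; auto.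
  - destruct IHd; apply den_scott_lam; auto.
  - destruct IHd1, IHd2; apply den_scott_app; auto.
  - destruct IHd1, IHd2; apply den_scott_letrec; auto.
  - destruct IHd as [M C]; split; intros n0 P0; intros; cbn [den]; [apply M | apply C]; auto.
  - destruct IHd as [M C]; split; intros n0 P0; intros; cbn [den]; [apply M | apply C]; auto.
  - destruct IHd as [M C]; split; intros n0 P0; intros; cbn [den];
      destruct excluded_middle_informative; auto.
    + apply (po_refl (po_lift_dom Priv t)).
    + apply (is_lub_const (po_lift_dom Priv t)).
  - destruct IHd1 as [M1 C1], IHd2 as [M2 C2]; split; intros n0 P0; intros; cbn [den];
      destruct excluded_middle_informative; auto.
Qed.

End Scott.

Section Safety.
Variable Priv : Type.

Unset Implicit Arguments.
(* [safe] read on an arbitrary carrier [dom t]; only [t = aerase th]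
   matters, but decoupling the two lets subtyping be handled without
   dependent casts between carriers. *)
Fixpoint safe_at (th : aty Priv) (t : ty) : lifted (car (dom Priv t)) -> Prop :=
  match th with
  | Abool => fun u => match u with Star => False | _ => True end
  | Aarrow th1 Pi th2 =>
      match t return lifted (car (dom Priv t)) -> Prop with
      | Tbool => fun u => match u with Star => False | _ => True end
      | Tarrow t1 t2 => fun u =>
          match u with
          | Bot => True
          | Star => False
          | Val F => forall P d, psubset Pi P ->
                       safe_at th1 t1 (Val d) -> safe_at th2 t2 (proj1_sig F P d)
          end
      end
  end.
Set Implicit Arguments.

Lemma safe_iff_safe_at (th : aty Priv) u : safe u <-> safe_at th (aerase th) u.
Proof.
  revert u; induction th as [| th1 IH1 Pi th2 IH2]; intros [| | F]; simpl; try tauto.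
  split; intros H P d HP Hd; apply IH2, H, IH1; auto; apply IH1, Hd.
Qed.

Lemma safe_at_cast (th : aty Priv) t t' (E : t = t') u :
  safe_at th t u -> safe_at th t' (eq_rect t (fun t => lifted (car (dom Priv t))) u t' E).
Proof. destruct E; auto. Qed.

Lemma safe_at_subty (th th' : aty Priv) :
  subty th th' -> forall t u, safe_at th t u -> safe_at th' t u.
Proof.
  induction 1 as [| th1 th1' th2 th2' Pi1 Pi2 _ IH1 _ IH2 HPi]; intros t u Hu; auto.
  destruct t as [| t1 t2]; simpl in *; auto.
  destruct u as [| | F]; auto.
  intros P d HP Hd; apply IH2, Hu, IH1, Hd.
  intros q Hq; apply HP, HPi, Hq.
Qed.

Lemma safe_bot (th : aty Priv) : safe (th := th) Bot.
Proof. destruct th; simpl; auto. Qed.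

Lemma safe_star (th : aty Priv) : ~ safe (th := th) Star.
Proof. destruct th; simpl; auto. Qed.

Lemma safe_is_lub (th : aty Priv) (u : nat -> lifted (car (dom Priv (aerase th)))) w :
  @chain (lift _) u -> @is_lub (lift _) u w -> (forall k, safe (u k)) -> safe w.
Proof.
  revert u w; induction th as [| th1 _ Pi th2 IH2]; intros u w Hu Hw Hsafe;
    destruct (is_lub_lift_cases (po_dom Priv _) Hu Hw)
      as [(_ & ->) | [((k & Hstar) & ->) | (k & c & a & Hc & Hval & Ha & ->)]];
    try apply safe_bot;
    try (specialize (Hsafe (0 + k)); rewrite Hstar in Hsafe; contradiction);
    simpl; auto.
  intros P d HP Hd.
  apply (IH2 (fun i => proj1_sig (c i) P d)).
  - intros i; apply Hc.
  - apply (is_lub_funspace_apply (po_dom Priv _) (@complete_dom Priv _) Hc Ha).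
  - intros i; specialize (Hsafe (i + k)); rewrite Hval in Hsafe; apply Hsafe; auto.
Qed.

Lemma safe_env_upd (G : actx Priv) (h : env Priv (cerase G)) x th (d : car (dom Priv (aerase th))) :
  safe_env h -> safe (th := th) (Val d) ->
  @safe_env Priv ((x, th) :: G) (upd h x d : env Priv (cerase ((x, th) :: G))).
Proof.
  intros Hh Hd y th' Hy; generalize (lookup_cerase Hy); revert Hy; unfold upd; simpl.
  destruct (Nat.eqb y x); intros Hy E.
  - injection Hy; intros; subst; rewrite (proof_irrelevance _ E eq_refl); exact Hd.
  - rewrite (proof_irrelevance _ E (lookup_cerase Hy)); apply Hh.
Qed.

End Safety.

Section Soundness.
Variables (Principal Priv : Type) (A : Principal -> pset Priv).

Lemma den_cast D e t t' (E : t = t') (d : typing D e t) n P h :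
  den A (eq_rect t (typing D e) d t' E) n P h =
  eq_rect t (fun t => lifted (car (dom Priv t))) (den A d n P h) t' E.
Proof. destruct E; reflexivity. Qed.

Definition sound G n e th Pi (d : atyping A G n e th Pi) : Prop :=
  forall P (h : env Priv (cerase G)), safe_env h -> psubset Pi P ->
    safe (den A (erase_deriv d) n P h).

(* Fixed-point induction: safety is admissible and holds at the bottom function. *)
Lemma safe_rec_fix D f x e1 (th1 th2 : aty Priv) Pi
  (d1 : typing ((x, aerase th1) :: (f, Tarrow (aerase th1) (aerase th2)) :: D) e1 (aerase th2))
  n (h : env Priv D) :
  (forall g, safe (th := Aarrow th1 Pi th2) (Val g) ->
             safe (th := Aarrow th1 Pi th2) (Val (rec_step A d1 n h g))) ->
  safe (th := Aarrow th1 Pi th2) (Val (rec_fix A d1 n h)).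
Proof.
  intros Hstep; destruct (den_scott A d1) as [Hmono Hcont].
  destruct (rec_fix_is_lub_iter Hmono Hcont n h) as [Hchain Hlub].
  apply (safe_is_lub (th := Aarrow th1 Pi th2) (u := fun k => Val (rec_iter A d1 n h k))).
  - intros k; apply (lift_le_val (po_dom Priv _)), Hchain.
  - apply (is_lub_val (po_dom Priv _)), Hlub.
  - intros k; induction k as [| k IH].
    + intros P d _ _; apply safe_bot.
    + apply Hstep, IH.
Qed.

Lemma sound_lam G n x e (th1 th2 : aty Priv) Pi (d : atyping A ((x, th1) :: G) n e th2 Pi) :
  sound d -> sound (A_lam d).
Proof.
  intros Hd P h Hh _; cbn [erase_deriv den safe]; intros P' v HP' Hv.
  unfold mk_fun; destruct excluded_middle_informative; simpl.
  - apply Hd; [apply safe_env_upd |]; auto.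
  - apply safe_bot.
Qed.

Lemma sound_app G n e1 e2 (th1 th1' th2 : aty Priv) Pi Pi1 Pi2
  (d1 : atyping A G n e1 (Aarrow th1 Pi th2) Pi1) (d2 : atyping A G n e2 th1' Pi2)
  (s : subty th1' th1) :
  sound d1 -> sound d2 -> sound (A_app d1 d2 s).
Proof.
  intros Hd1 Hd2 P h Hh HP; cbn [erase_deriv den].
  fold (aerase th1) (aerase th2) (aerase th1'); rewrite den_cast.
  assert (Hfun := Hd1 P h Hh ltac:(intros q Hq; apply HP; left; right; exact Hq)).
  assert (Harg := Hd2 P h Hh ltac:(intros q Hq; apply HP; right; exact Hq)).
  apply safe_iff_safe_at, (safe_at_cast (subty_erase s)), (safe_at_subty s),
    safe_iff_safe_at in Harg.
  change (safe (th := Aarrow th1 Pi th2)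
            (den A (t := Tarrow (aerase th1) (aerase th2)) (erase_deriv d1) n P h)) in Hfun.
  revert Hfun Harg.
  destruct (den A (t := Tarrow (aerase th1) (aerase th2)) (erase_deriv d1) n P h) as [| | F];
    simpl; intros Hfun Harg; try apply safe_bot; try contradiction.
  destruct (eq_rect _ _ (den A (erase_deriv d2) n P h) _ (subty_erase s)) as [| | v];
    simpl; try apply safe_bot; [exfalso; exact (safe_star Harg) |].
  apply Hfun; [intros q Hq; apply HP; left; left; exact Hq | exact Harg].
Qed.

Lemma sound_if G n e e1 e2 (th : aty Priv) Pi1 Pi2 Pi3
  (d0 : atyping A G n e Abool Pi1) (d1 : atyping A G n e1 th Pi2) (d2 : atyping A G n e2 th Pi3) :
  sound d0 -> sound d1 -> sound d2 -> sound (A_if d0 d1 d2).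
Proof.
  intros Hd0 Hd1 Hd2 P h Hh HP; cbn [erase_deriv den].
  assert (Hb := Hd0 P h Hh ltac:(intros q Hq; apply HP; left; left; exact Hq)).
  change (safe (th := Abool) (den A (t := Tbool) (erase_deriv d0) n P h)) in Hb.
  revert Hb; destruct (den A (t := Tbool) (erase_deriv d0) n P h) as [| | [|]];
    simpl; intros Hb; try apply safe_bot; try contradiction.
  - apply Hd1; auto; intros q Hq; apply HP; left; right; exact Hq.
  - apply Hd2; auto; intros q Hq; apply HP; right; exact Hq.
Qed.

Lemma sound_letrec G n f x e1 e2 (th1 th2 th : aty Priv) Pi Pi1
  (d1 : atyping A ((x, th1) :: (f, Aarrow th1 Pi th2) :: G) n e1 th2 Pi)
  (d2 : atyping A ((f, Aarrow th1 Pi th2) :: G) n e2 th Pi1) :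
  sound d1 -> sound d2 -> sound (A_letrec d1 d2).
Proof.
  intros Hd1 Hd2 P h Hh HP; cbn [erase_deriv den].
  apply Hd2; [apply safe_env_upd; [exact Hh |] | intros q Hq; apply HP; right; exact Hq].
  apply (safe_rec_fix (d1 := erase_deriv d1)).
  intros g Hg; unfold rec_step, mk_fun; destruct excluded_middle_informative; simpl.
  - intros P' v HP' Hv; apply Hd1; auto; repeat apply safe_env_upd; auto.
  - intros; apply safe_bot.
Qed.

Lemma sound_check G n p e (th : aty Priv) Pi (d : atyping A G n e th Pi) :
  sound d -> sound (A_check p d).
Proof.
  intros Hd P h Hh HP; cbn [erase_deriv den]; destruct excluded_middle_informative as [Hp | Hp].
  - apply Hd; auto; intros q Hq; apply HP; left; exact Hq.
  - exfalso; apply Hp, HP; right; reflexivity.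
Qed.

Lemma sound_dopriv G n p e (th : aty Priv) Pi (d : atyping A G n e th (pjoin A n Pi p)) :
  sound d -> sound (A_dopriv d).
Proof.
  intros Hd P h Hh HP; apply Hd; auto.
  intros q [Hq | Hq]; [left; apply HP, Hq | right; exact Hq].
Qed.

Lemma sound_signs G n n' e (th : aty Priv) Pi (d : atyping A G n' e th Pi)
  (HA : psubset Pi (A n')) :
  sound d -> sound (A_signs n d HA).
Proof. intros Hd P h Hh HP; apply Hd; auto; intros q Hq; split; auto. Qed.

Lemma sound_test G n p e1 e2 (th : aty Priv) Pi1 Pi2
  (d1 : atyping A G n e1 th Pi1) (d2 : atyping A G n e2 th Pi2) :
  sound d1 -> sound d2 -> sound (A_test p d1 d2).
Proof.
  intros Hd1 Hd2 P h Hh HP; cbn [erase_deriv den]; destruct excluded_middle_informative.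
  - apply Hd1; auto; intros q Hq; apply HP; left; exact Hq.
  - apply Hd2; auto; intros q Hq; apply HP; right; exact Hq.
Qed.

End Soundness.

Theorem lemma2 (Principal Priv : Type) (A : Principal -> Priv -> Prop)
  (Delta : actx Priv) (n : Principal) (e : expr Principal Priv)
  (theta : aty Priv) (Pi : pset Priv)
  (D : atyping A Delta n e theta Pi) :
  forall (P : pset Priv) (h : env Priv (cerase Delta)),
    safe_env h -> psubset Pi P ->
    @safe Priv theta (den A (erase_deriv D) n P h).
Proof.
  induction D.
  - intros; exact I.
  - intros P h Hh _; apply Hh.
  - exact (sound_lam IHD).
  - exact (sound_app s IHD1 IHD2).
  - exact (sound_if IHD1 IHD2 IHD3).
  - exact (sound_letrec IHD1 IHD2).
  - exact (sound_check IHD).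
  - exact (sound_dopriv IHD).
  - exact (sound_signs _ _ IHD).
  - exact (sound_test _ IHD1 IHD2).
Qed.
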